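(* For every return morphism $\sigma:\mathcal{A}^*\to\mathcal{A}^*$ and every total order $\le$ on $\mathcal{A}$, there exists a unique total order $\preceq$ on $\mathcal{A}$ such that $\sigma$ is left order preserving from $\preceq$ to $\le$; likewise there exists a unique total order $\preceq'$ on $\mathcal{A}$ such that $\sigma$ is right order preserving from $\preceq'$ to $\le$.
   Context: A return morphism for $w\in\mathcal{A}^+$ is an injective non-erasing morphism $\sigma:\mathcal{A}^*\to\mathcal{A}^*$ such that for each $a$, $\sigma(a)w$ contains exactly two occurrences of $w$, as proper prefix and proper suffix ($w$ taken of maximal length if unspecified). For $s,p\in\mathcal{A}^*$: $\mathcal{A}^L_{\sigma,s}=\{a:\sigma(a)\in\mathcal{A}^+s\}$, $\mathcal{A}^R_{\sigma,p}=\{a:\sigma(a)w\in p\mathcal{A}^+\}$; $\varphi^L_{\sigma,s}$ maps $a\in\mathcal{A}^L_{\sigma,s}$ to the letter $a'$ with $\sigma(a)\in\mathcal{A}^*a's$, $\varphi^R_{\sigma,p}$ maps $b\in\mathcal{A}^R_{\sigma,p}$ to the letter $b'$ with $\sigma(b)w\in pb'\mathcal{A}^*$. $\mathcal{T}^L(\sigma)$ is the set of longest common suffixes of $\sigma(a),\sigma(b)$ for $a\ne b$, $\mathcal{T}^R(\sigma)$ the set of longest common prefixes of $\sigma(a)w,\sigma(b)w$ for $a\ne b$. A partial map $\varphi$ is order preserving from $\preceq$ to $\le$ if $x\prec y$ implies $\varphi(x)\le\varphi(y)$ for all $x,y$ in its domain. $\sigma$ is left (resp. right) order preserving from $\preceq$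 to $\le$ if $\varphi^L_{\sigma,s}$ for every $s\in\mathcal{T}^L(\sigma)$ (resp. $\varphi^R_{\sigma,p}$ for every $p\in\mathcal{T}^R(\sigma)$) is order preserving from $\preceq$ to $\le$. *)

(* Words over a finite alphabet A are [seq A]; a morphism
   sigma : A^* -> A^* is given by the images of letters. *)
From mathcomp Require Import all_boot.
Set Implicit Arguments. Unset Strict Implicit. Unset Printing Implicit Defensive.

Section Words.
Variable A : finType.
Implicit Types (sigma : A -> seq A) (u v w s p : seq A) (R : rel A).

Definition morph sigma u : seq A := flatten (map sigma u).

Definition occurs_at w u (i : nat) : bool :=
  (i + size w <= size u) && (take (size w) (drop i u) == w).

Definition return_morphism_for sigma w : Prop :=
  [/\ w != [::],
      injective (morph sigma),
      (forall a, sigma a != [::]) &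
      (forall a i, occurs_at w (sigma a ++ w) i <-> (i = 0 \/ i = size (sigma a)))].

Definition return_morphism sigma w : Prop :=
  return_morphism_for sigma w /\
  (forall w', return_morphism_for sigma w' -> size w' <= size w).

Fixpoint lcp u v : seq A :=
  match u, v with
  | x :: u', y :: v' => if x == y then x :: lcp u' v' else [::]
  | _, _ => [::]
  end.
Definition lcs u v : seq A := rev (lcp (rev u) (rev v)).

Definition TL sigma s : Prop := exists a b, a != b /\ s = lcs (sigma a) (sigma b).
Definition TR sigma w p : Prop :=
  exists a b, a != b /\ p = lcp (sigma a ++ w) (sigma b ++ w).

(* graphs of the partial maps phi^L_{sigma,s} and phi^R_{sigma,p}:
   phiL sigma s a a'  <->  a \in A^L_{sigma,s} and phi^L_{sigma,s}(a) = a' *)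
Definition phiL sigma s (a a' : A) : Prop := exists t, sigma a = t ++ a' :: s.
Definition phiR sigma w p (b b' : A) : Prop := exists t, sigma b ++ w = p ++ b' :: t.

Definition total_order R : Prop :=
  [/\ reflexive R, antisymmetric R, transitive R & total R].

Definition strict R (x y : A) : bool := R x y && (x != y).

Definition order_preserving (phi : A -> A -> Prop) (pre le : rel A) : Prop :=
  forall x y x' y', phi x x' -> phi y y' -> strict pre x y -> le x' y'.

Definition left_order_preserving sigma (pre le : rel A) : Prop :=
  forall s, TL sigma s -> order_preserving (phiL sigma s) pre le.
Definition right_order_preserving sigma w (pre le : rel A) : Prop :=
  forall p, TR sigma w p -> order_preserving (phiR sigma w p) pre le.

(* there is a unique total order satisfying P (uniqueness up to extensional equality) *)
Definition unique_total_order (P : rel A -> Prop) : Prop :=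
  exists R, [/\ total_order R, P R &
    forall R', total_order R' -> P R' -> R' =2 R].

End Words.

From mathcomp Require Import all_boot.
Set Implicit Arguments. Unset Strict Implicit. Unset Printing Implicit Defensive.

(* Both halves of the theorem are instances of one fact about prefix codes.
   Let f map the letters injectively onto a prefix-free set of words and let
   <= be a total order on letters.  Call p a branch point if p is the longest
   common prefix of f a and f b for some a <> b, and let phi_p send x to the
   letter following p in f x.  Then the lexicographic order
       a <=' b  :<=>  f a <=_lex f b
   is the unique total order for which every phi_p is order preserving: two
   distinct letters a, b first differ after their branch point, so phi_p
   decides their comparison, and any admissible order must agree with it.
   The right case applies this to f a = sigma a w, which is prefix-free
   because w occurs in sigma(a) w only at its two ends; the left case applies
   it to f a = rev (sigma a), which is prefix-free (i.e. sigma is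
   suffix-free) for the same reason. *)

Section Lexicographic.
Variables (A : finType) (le : rel A).
Hypothesis le_total_order : total_order le.

Fixpoint lex (u v : seq A) : bool :=
  match u, v with
  | [::], _ => true
  | _ :: _, [::] => false
  | x :: u', y :: v' => if x == y then lex u' v' else le x y
  end.

Lemma lex_refl : reflexive lex.
Proof. by elim=> //= x u IH; rewrite eqxx. Qed.

Lemma lex_trans u v r : lex u v -> lex v r -> lex u r.
Proof.
case: le_total_order => _ le_anti le_trans _.
elim: u v r => [//|x u IH] [|y v] [|z r] //=.
have [<-|nxy] := eqVneq x y.
  by have [_|//] := eqVneq x z; exact: IH.
have [<-|nyz] := eqVneq y z; first by rewrite (negPf nxy).
move=> le_xy le_yz; have [exz|_] := eqVneq x z; last exact: le_trans le_xy le_yz.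
by move: nxy; rewrite -exz in le_yz; rewrite (le_anti x y) ?le_xy ?le_yz ?eqxx.
Qed.

Lemma lex_first_difference p x y t u :
  x != y -> lex (p ++ x :: t) (p ++ y :: u) = le x y.
Proof. by move=> nxy; elim: p => [|z p IH] /=; rewrite ?(negPf nxy) ?eqxx. Qed.

End Lexicographic.

Section LongestCommonPrefix.
Variable A : finType.

Lemma lcp_cases (u v : seq A) :
  (exists r, v = u ++ r) \/ (exists r, u = v ++ r) \/
  exists x y t1 t2, [/\ x != y, u = lcp u v ++ x :: t1 & v = lcp u v ++ y :: t2].
Proof.
elim: u v => [|x u IH] [|y v] /=.
- by left; exists [::].
- by left; exists (y :: v).
- by right; left; exists (x :: u).
have [<-|nxy] := eqVneq x y; last by right; right; exists x, y, u, v.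
have [[r ->]|[[r ->]|[x' [y' [t1 [t2 [nxy' eu ev]]]]]]] := IH v.
- by left; exists r.
- by right; left; exists r.
by right; right; exists x', y', t1, t2; split; rewrite //= -?eu -?ev.
Qed.

End LongestCommonPrefix.

Section PrefixCode.
Variables (A : finType) (f : A -> seq A) (le : rel A).
Hypothesis le_total_order : total_order le.

Hypothesis f_prefix_free : forall a b t, f b = f a ++ t -> a = b.

Definition branch_point (p : seq A) : Prop :=
  exists a b, a != b /\ p = lcp (f a) (f b).

Definition next_letter (p : seq A) (x x' : A) : Prop :=
  exists t, f x = p ++ x' :: t.

Definition code_order_preserving (pre : rel A) : Prop :=
  forall p, branch_point p -> order_preserving (next_letter p) pre le.

Lemma codewords_branch a b : a != b ->
  exists p x y t1 t2,
    [/\ p = lcp (f a) (f b), x != y, f a = p ++ x :: t1 & f b = p ++ y :: t2].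
Proof.
move=> nab; have [[r e]|[[r e]|[x [y [t1 [t2 [nxy ea eb]]]]]]] := lcp_cases (f a) (f b).
- by move: nab; rewrite (f_prefix_free e) eqxx.
- by move: nab; rewrite (f_prefix_free e) eqxx.
by exists (lcp (f a) (f b)), x, y, t1, t2.
Qed.

Definition code_lex : rel A := fun a b => lex le (f a) (f b).

Lemma code_lex_total_order : total_order code_lex.
Proof.
have [le_refl le_anti _ le_tot] := le_total_order.
split=> [a|a b /andP[lab lba]|b a c|a b].
- exact: lex_refl.
- apply/eqP/negPn/negP => nab.
  have [p [x [y [t1 [t2 [_ nxy ea eb]]]]]] := codewords_branch nab.
  have nyx : y != x by rewrite eq_sym.
  move: lab lba; rewrite /code_lex ea eb !lex_first_difference // => lxy lyx.
  by move: nxy; rewrite (le_anti x y) ?lxy ?lyx ?eqxx.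
- exact: lex_trans.
- have [->|nab] := eqVneq a b; first by rewrite /code_lex lex_refl.
  have [p [x [y [t1 [t2 [_ nxy ea eb]]]]]] := codewords_branch nab.
  have nyx : y != x by rewrite eq_sym.
  by rewrite /code_lex ea eb !lex_first_difference // le_tot.
Qed.

Lemma code_lex_order_preserving : code_order_preserving code_lex.
Proof.
have [le_refl _ _ _] := le_total_order.
move=> p _ x y x' y' [t ex] [u ey] /andP[lxy _].
have [<-|nxy'] := eqVneq x' y'; first exact: le_refl.
by move: lxy; rewrite /code_lex ex ey lex_first_difference.
Qed.

(* Any admissible total order coincides with [code_lex]: on x <> y both are
   decided by the letters following the branch point of f x and f y. *)
Lemma code_lex_unique pre :
  total_order pre -> code_order_preserving pre -> pre =2 code_lex.
Proof.
move=> [pre_refl _ _ pre_tot] pre_pres x y.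
have [<-|nxy] := eqVneq x y; first by rewrite pre_refl /code_lex lex_refl.
have [p [a [b [t1 [t2 [ep nab ex ey]]]]]] := codewords_branch nxy.
have bp : branch_point p by exists x, y.
have next_x : next_letter p x a by exists t1.
have next_y : next_letter p y b by exists t2.
rewrite /code_lex ex ey lex_first_difference //.
case pre_xy: (pre x y).
  by symmetry; apply: (pre_pres p bp x y); rewrite // /strict pre_xy nxy.
have pre_yx : pre y x by move: (pre_tot x y); rewrite pre_xy.
have le_ba : le b a by apply: (pre_pres p bp y x); rewrite // /strict pre_yx eq_sym.
have [_ le_anti _ _] := le_total_order.
apply/esym/negbTE/negP => le_ab.
by move: nab; rewrite (le_anti a b) ?le_ab ?le_ba ?eqxx.
Qed.

Theorem prefix_code_unique_order : unique_total_order code_order_preserving.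
Proof.
exists code_lex; split; [exact: code_lex_total_order
  | exact: code_lex_order_preserving | exact: code_lex_unique].
Qed.

End PrefixCode.

Section ReturnMorphism.
Variables (A : finType) (sigma : A -> seq A) (w : seq A).
Hypothesis sigma_return : return_morphism_for sigma w.

Lemma return_letter_inj : injective sigma.
Proof.
case: sigma_return => _ morph_inj _ _ a b e.
have : morph sigma [:: a] = morph sigma [:: b] by rewrite /morph /= e.
by move/morph_inj => [].
Qed.

Lemma return_occurrence a i :
  occurs_at w (sigma a ++ w) i -> i = 0 \/ i = size (sigma a).
Proof. by case: sigma_return => _ _ _ occ /occ. Qed.

Lemma return_prefix a : take (size w) (sigma a ++ w) = w.
Proof.
case: sigma_return => _ _ _ occ.
by have /andP[_ /eqP] := proj2 (occ a 0) (or_introl erefl); rewrite drop0.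
Qed.

(* sigma is suffix-free: sigma a cannot be a proper suffix of sigma b, since
   w would then occur strictly inside sigma(b) w. *)
Lemma return_suffix_free a b t : rev (sigma b) = rev (sigma a) ++ t -> a = b.
Proof.
move=> e; have eb : sigma b = rev t ++ sigma a by rewrite -[sigma b]revK e rev_cat revK.
have [_ _ sigma_ne _] := sigma_return.
have : occurs_at w (sigma b ++ w) (size (rev t)).
  rewrite /occurs_at eb -catA drop_size_cat // return_prefix eqxx andbT.
  by rewrite !size_cat leq_add2l leq_addl.
case/return_occurrence => [/eqP|].
  by rewrite size_eq0 => /eqP t0; apply: return_letter_inj; rewrite eb t0.
rewrite eb size_cat -{1}[size (rev t)]addn0 => /eqP.
by rewrite eqn_add2l eq_sym size_eq0 (negPf (sigma_ne a)).
Qed.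

(* The words sigma(a) w form a prefix code, for the same reason. *)
Lemma return_prefix_free a b t : sigma b ++ w = (sigma a ++ w) ++ t -> a = b.
Proof.
move=> e; have [_ _ sigma_ne _] := sigma_return.
have : occurs_at w (sigma b ++ w) (size (sigma a)).
  rewrite /occurs_at e -catA drop_size_cat // take_size_cat // eqxx.
  by rewrite !size_cat addnA leq_addr.
case/return_occurrence => [/eqP|size_ab]; first by rewrite size_eq0 (negPf (sigma_ne a)).
move: e; rewrite -catA => /eqP; rewrite eqseq_cat ?size_ab // => /andP[/eqP e _].
by apply: return_letter_inj; rewrite e.
Qed.

Lemma left_order_preservingE pre le :
  left_order_preserving sigma pre le <->
  code_order_preserving (fun a => rev (sigma a)) le pre.
Proof.
have nextE p x x' : next_letter (fun a => rev (sigma a)) p x x' <-> phiL sigma (rev p) x x'.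
  split=> [[t e]|[t e]]; exists (rev t).
    by rewrite -[sigma x]revK e rev_cat rev_cons cat_rcons.
  by rewrite e rev_cat rev_cons revK cat_rcons.
split=> pres.
  move=> p [a [b [nab ep]]] x y x' y' /nextE nx /nextE ny.
  by apply: pres nx ny; exists a, b; split => //; rewrite ep.
move=> s [a [b [nab es]]] x y x' y' nx ny.
have bp : branch_point (fun a => rev (sigma a)) (rev s).
  by exists a, b; split => //; rewrite es /lcs revK.
by apply: (pres _ bp x y); apply/nextE; rewrite revK.
Qed.

End ReturnMorphism.

Lemma unique_total_order_iff (A : finType) (P Q : rel A -> Prop) :
  (forall R, P R <-> Q R) -> unique_total_order P -> unique_total_order Q.
Proof.
move=> PQ [R [R_tot PR R_unique]]; exists R; split; first by [].
  exact/PQ.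
by move=> R' R'_tot /PQ; exact: R_unique.
Qed.

Theorem mainTheorem18 (A : finType) (sigma : A -> seq A) (w : seq A) (le : rel A) :
  return_morphism sigma w -> total_order le ->
  unique_total_order (fun pre => left_order_preserving sigma pre le) /\
  unique_total_order (fun pre => right_order_preserving sigma w pre le).
Proof.
move=> [sigma_return _] le_tot; split.
- apply: (@unique_total_order_iff _ (code_order_preserving (fun a => rev (sigma a)) le)).
    by move=> pre; apply: iff_sym; apply: left_order_preservingE.
  apply: prefix_code_unique_order => //.
  exact: return_suffix_free sigma_return.
- (* right order preservation is literally the code property of sigma(_) w *)
  apply: prefix_code_unique_order => //.
  exact: return_prefix_free sigma_return.
Qed.
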